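(* Let $(Q,\cdot)$ be a Ward quasigroup with $xx=e$ for all $x\in Q$. Define $x\star y=(e\cdot x)\cdot y$. Then $(Q,\star)$ is a quasigroup satisfying $((e\star e)\star(x\star z))\star((e\star y)\star z)=x\star y$ for all $x,y,z\in Q$, i.e. $(Q,\star,e)$ is a double Ward quasigroup.
   Context: A quasigroup is a magma in which $ax=b$ and $ya=b$ have unique solutions for all $a,b$. A Ward quasigroup is a quasigroup satisfying $(xz)(yz)=xy$ for all $x,y,z$; in it there is $e$ with $xx=e$ for all $x$. A double Ward quasigroup $(Q,\cdot,e)$ is a quasigroup with an element $e$ such that $(ee\cdot xz)(ey\cdot z)=xy$ for all $x,y,z$. *)

Definition quasigroup {Q : Type} (mul : Q -> Q -> Q) : Prop :=
  (forall a b : Q, exists! x : Q, mul a x = b) /\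
  (forall a b : Q, exists! y : Q, mul y a = b).

Definition ward_quasigroup {Q : Type} (mul : Q -> Q -> Q) : Prop :=
  quasigroup mul /\
  (forall x y z : Q, mul (mul x z) (mul y z) = mul x y).

Definition double_ward_quasigroup {Q : Type} (mul : Q -> Q -> Q) (e : Q) : Prop :=
  quasigroup mul /\
  (forall x y z : Q,
     mul (mul (mul e e) (mul x z)) (mul (mul e y) z) = mul x y).


(* In a Ward quasigroup with [x x = e], the choice [z := x] in the Ward law
   gives [e (y x) = x y], so left multiplication by [e] is an involution
   (every element is a product) and [e] is a right identity.  Hence
   [x * y := (e x) y] is again a quasigroup, and the double Ward law for [*]
   collapses, after cancelling the [e]'s, to the Ward law [((e x) z) (y z) = (e x) y]. *)

Lemma quasigroup_mul_involutive {Q : Type} (mul : Q -> Q -> Q) (f : Q -> Q) :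
  (forall u, f (f u) = u) ->
  quasigroup mul -> quasigroup (fun x y => mul (f x) y).
Proof.
  intros f_inv [left_div right_div]; split.
  - intros a b. exact (left_div (f a) b).
  - intros a b. destruct (right_div a b) as [w [w_a w_uniq]].
    exists (f w); split.
    + rewrite f_inv. exact w_a.
    + intros y y_a. rewrite <- (f_inv y). f_equal. exact (w_uniq _ y_a).
Qed.

Section WardUnit.

Variables (Q : Type) (mul : Q -> Q -> Q) (e : Q).
Hypothesis mul_ward : forall x y z, mul (mul x z) (mul y z) = mul x y.
Hypothesis mulxx : forall x, mul x x = e.
Hypothesis mul_left_solvable : forall a b, exists x, mul a x = b.

Lemma mule_swap (x y : Q) : mul e (mul y x) = mul x y.
Proof. rewrite <- (mulxx x). apply mul_ward. Qed.

Lemma mule_involutive (u : Q) : mul e (mul e u) = u.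
Proof.
  destruct (mul_left_solvable u u) as [v uv]. rewrite <- uv.
  rewrite (mule_swap v u), mule_swap. reflexivity.
Qed.

Lemma mulr_e (u : Q) : mul u e = u.
Proof.
  destruct (mul_left_solvable u u) as [v uv].
  pose proof (mul_ward u v v) as ward_uvv.
  rewrite uv, mulxx in ward_uvv. exact ward_uvv.
Qed.

Lemma double_ward_law_dual (x y z : Q) :
  let star a b := mul (mul e a) b in
  star (star (star e e) (star x z)) (star (star e y) z) = star x y.
Proof.
  cbv beta zeta. rewrite (mulxx e), mulr_e, (mulxx e), !mule_involutive.
  apply mul_ward.
Qed.

End WardUnit.

Theorem proposition4p2 (Q : Type) (mul : Q -> Q -> Q) (e : Q) :
  ward_quasigroup mul ->
  (forall x : Q, mul x x = e) ->
  double_ward_quasigroup (fun x y => mul (mul e x) y) e.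
Proof.
  intros [mul_qg mul_ward] mulxx.
  assert (mul_left_solvable : forall a b, exists x, mul a x = b).
  { intros a b. destruct (proj1 mul_qg a b) as [x [ax _]]. exists x. exact ax. }
  split.
  - apply quasigroup_mul_involutive; [|exact mul_qg].
    exact (mule_involutive Q mul e mul_ward mulxx mul_left_solvable).
  - exact (double_ward_law_dual Q mul e mul_ward mulxx mul_left_solvable).
Qed.
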